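(* Let $F/\mathbb{Q}_p$ be a finite extension with ring of integers $\mathcal{O}_F$, uniformizer $\pi$, and residue field $k_F$ of cardinality $q$. For $\lambda \in k_F^\times$ let $[\lambda] \in \mathcal{O}_F$ be the unique $(q-1)$-st root of unity lifting $\lambda$, and set $[0] = 0$. Let $I_0 = \{0\}$ and for $m \in \mathbb{N}$ let $I_m = \{ [\lambda_0] + \pi[\lambda_1] + \dots + \pi^{m-1}[\lambda_{m-1}] : (\lambda_0, \dots, \lambda_{m-1}) \in k_F^m \} \subset \mathcal{O}_F$. Then the set \[ \coprod_{m \geq 0} \left\{ \begin{pmatrix} \pi^m & 0 \\ \pi^{-m} \kappa & \pi^{-m} \end{pmatrix} : \kappa \in I_{2m} \right\} \ \sqcup\ \coprod_{m \geq 1} \left\{ \begin{pmatrix} 0 & -\pi^m \\ \pi^{-m} & -\pi^{-m+1}\kappa \end{pmatrix} : \kappa \in I_{2m-1} \right\} \] is a complete set of representatives (each coset represented exactly once) of the right cosets $\mathrm{SL}_2(\mathcal{O}_F) g$ of $\mathrm{SL}_2(\mathcal{O}_F)$ in $\mathrm{SL}_2(F)$. *)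

From HB Require Import structures.
From mathcomp Require Import all_boot all_order all_algebra.
Set Implicit Arguments. Unset Strict Implicit. Unset Printing Implicit Defensive.
Import Order.TTheory GRing.Theory Num.Theory.
Local Open Scope ring_scope.

(* A (normalized, discrete) valuation v on a field F, given on nonzero
   elements (the value at 0 is irrelevant and never used). *)
Definition is_discrete_valuation (F : fieldType) (v : F -> int) : Prop :=
  (forall x y : F, x != 0 -> y != 0 -> v (x * y) = v x + v y) /\
  (forall x y : F, x != 0 -> y != 0 -> x + y != 0 ->
      Num.min (v x) (v y) <= v (x + y)).

(* "x is 0 or v x >= N", i.e. x lies in pi^N O_F. *)
Definition vge (F : fieldType) (v : F -> int) (x : F) (N : int) : bool :=
  (x == 0) || (N <= v x).

Definition OF (F : fieldType) (v : F -> int) (x : F) : bool := vge v x 0.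

Definition v_complete (F : fieldType) (v : F -> int) : Prop :=
  forall u : nat -> F,
    (forall N : int, exists n0 : nat, forall m n : nat,
        (n0 <= m)%N -> (n0 <= n)%N -> vge v (u m - u n) N) ->
    exists l : F, forall N : int, exists n0 : nat, forall n : nat,
        (n0 <= n)%N -> vge v (u n - l) N.

(* red : O_F -> k is a surjective ring morphism with kernel pi O_F, so that
   k is (isomorphic to) the residue field O_F / pi O_F. *)
Definition is_residue_map (F : fieldType) (v : F -> int) (k : fieldType)
    (red : F -> k) : Prop :=
  [/\ red 1 = 1,
      (forall x y, OF v x -> OF v y -> red (x + y) = red x + red y),
      (forall x y, OF v x -> OF v y -> red (x * y) = red x * red y),
      (forall x, OF v x -> (red x = 0 <-> vge v x 1)) &
      (forall l : k, exists2 x, OF v x & red x = l)].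

Definition is_teichmuller (F : fieldType) (v : F -> int) (k : finFieldType)
    (red : F -> k) (tlift : k -> F) : Prop :=
  tlift 0 = 0 /\
  forall l : k, l != 0 ->
    [/\ OF v (tlift l), red (tlift l) = l & tlift l ^+ (#|k|.-1) = 1].

Definition Iset (F : fieldType) (k : finFieldType) (tlift : k -> F) (pi : F)
    (n : nat) (x : F) : Prop :=
  exists lam : 'I_n -> k, x = \sum_(i < n) pi ^+ i * tlift (lam i).

Definition mx2 (F : fieldType) (a b c d : F) : 'M[F]_2 :=
  \matrix_(i < 2, j < 2)
    if (i == 0 :> nat) then (if (j == 0 :> nat) then a else b)
    else (if (j == 0 :> nat) then c else d).

Definition SL2 (F : fieldType) (A : 'M[F]_2) : Prop := \det A = 1.
Definition SL2O (F : fieldType) (v : F -> int) (A : 'M[F]_2) : Prop :=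
  \det A = 1 /\ forall i j, OF v (A i j).

(* The representatives: b = false is the first family (m >= 0, kappa in I_2m),
   b = true the second (m >= 1, kappa in I_(2m-1)). *)
Definition rep_index (F : fieldType) (k : finFieldType) (tlift : k -> F)
    (pi : F) (b : bool) (m : nat) (kappa : F) : Prop :=
  if b then (1 <= m)%N /\ Iset tlift pi (2 * m - 1) kappa
  else Iset tlift pi (2 * m) kappa.

Definition rep (F : fieldType) (pi : F) (b : bool) (m : nat) (kappa : F)
    : 'M[F]_2 :=
  if b then mx2 0 (- pi ^+ m) (pi ^- m) (- (pi ^- m * pi) * kappa)
  else mx2 (pi ^+ m) 0 (pi ^- m * kappa) (pi ^- m).

From HB Require Import structures.
From mathcomp Require Import all_boot all_order all_algebra.
From mathcomp Require Import ring zify.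
Import Order.TTheory GRing.Theory Num.Theory.
Local Open Scope ring_scope.

Set Implicit Arguments.
Unset Strict Implicit.
Unset Printing Implicit Defensive.

(* Which entry of g in SL_2(F) has the least valuation decides its coset
   SL_2(O) g.  If it can be taken in the second column (after swapping the rows
   with the Weyl element w), then h = g r^-1 is integral for r in the first
   family as soon as kappa agrees with c/d modulo pi^(2m), where v(d) = -m.
   If it is attained only in the first column, the same argument applied to
   g w^-1 lands in the second family, because rep true m kappa is
   rep false m (pi kappa) w.  The elements of I_n are exactly the residues
   modulo pi^n, which provides kappa and, by comparing the entries of
   r1 r2^-1, uniqueness. *)

Section TwoByTwo.
Variable F : fieldType.
Implicit Types a b c d : F.

Lemma mx2_mul a b c d a' b' c' d' :
  mx2 a b c d *m mx2 a' b' c' d' =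
  mx2 (a * a' + b * c') (a * b' + b * d') (c * a' + d * c') (c * b' + d * d').
Proof.
apply/matrixP => i j; rewrite !mxE !big_ord_recl big_ord0 !mxE /=.
by case: i => [[|[|//]]] Hi; case: j => [[|[|//]]] Hj /=; rewrite addr0.
Qed.

Lemma mx2_eta (g : 'M[F]_2) : g = mx2 (g 0 0) (g 0 1) (g 1 0) (g 1 1).
Proof.
apply/matrixP => i j; rewrite !mxE.
by case: i => [[|[|//]]] Hi; case: j => [[|[|//]]] Hj /=; congr (g _ _); apply: val_inj.
Qed.

Lemma det_mx2 a b c d : \det (mx2 a b c d) = a * d - b * c.
Proof.
rewrite (expand_det_row _ 0) !big_ord_recl big_ord0 /cofactor !det_mx11 !mxE /=.
by rewrite expr0 expr1 mul1r mulN1r addr0 mulrN.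
Qed.

Lemma adj_mx2 a b c d : \adj (mx2 a b c d) = mx2 d (- b) (- c) a.
Proof.
apply/matrixP => i j; rewrite !mxE /cofactor det_mx11 !mxE /=.
by case: i => [[|[|//]]] Hi; case: j => [[|[|//]]] Hj /=;
  rewrite ?expr0 ?expr1 ?sqrrN ?expr1n ?mul1r ?mulN1r.
Qed.

Lemma det1_cols (a b c d : F) : a * d - b * c = 1 ->
  ((a != 0) || (c != 0)) && ((b != 0) || (d != 0)).
Proof.
move=> det; rewrite -!negb_and; apply/andP; split;
  apply/negP => /andP[/eqP x0 /eqP y0]; move: det;
  by rewrite x0 y0 ?mul0r ?mulr0 subrr => /eqP; rewrite eq_sym oner_eq0.
Qed.

Definition weyl : 'M[F]_2 := mx2 0 (-1) 1 0.

Lemma det_weyl : \det weyl = 1.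
Proof. by rewrite det_mx2; ring. Qed.

Lemma weyl_mulmx a b c d : weyl *m mx2 a b c d = mx2 (- c) (- d) a b.
Proof. by rewrite mx2_mul; congr mx2; ring. Qed.

Lemma mulmx_weyl a b c d : mx2 a b c d *m weyl = mx2 b (- a) d (- c).
Proof. by rewrite mx2_mul; congr mx2; ring. Qed.

End TwoByTwo.

Section Adjugate.
Variable R : comPzRingType.

Lemma mulmx_adjK m n (A : 'M[R]_(m, n)) (B : 'M_n) : \det B = 1 -> A *m \adj B *m B = A.
Proof. by move=> dB; rewrite -mulmxA mul_adj_mx dB mulmx1. Qed.

Lemma mulmxKadj m n (A : 'M[R]_(m, n)) (B : 'M_n) : \det B = 1 -> A *m B *m \adj B = A.
Proof. by move=> dB; rewrite -mulmxA mul_mx_adj dB mulmx1. Qed.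

Lemma det_mulmx_adj n (A B : 'M[R]_n) : \det B = 1 -> \det (A *m \adj B) = \det A.
Proof.
by move=> dB; rewrite -[in RHS](mulmx_adjK A dB) [in RHS]det_mulmx dB mulr1.
Qed.

End Adjugate.

Section ValuedField.
Variables (F : fieldType) (v : F -> int).
Hypothesis hv : is_discrete_valuation v.

Lemma valuationM (x y : F) : x != 0 -> y != 0 -> v (x * y) = v x + v y.
Proof. by case: hv => vM _; apply: vM. Qed.

Lemma valuation1 : v 1 = 0.
Proof. by have := @valuationM 1 1 (oner_neq0 _) (oner_neq0 _); rewrite mulr1; lia. Qed.

Lemma valuationV (x : F) : x != 0 -> v x^-1 = - v x.
Proof.
by move=> x0; have := valuationM x0 (invr_neq0 x0); rewrite mulfV // valuation1; lia.
Qed.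

Lemma valuationX (x : F) n : x != 0 -> v (x ^+ n) = n%:Z * v x.
Proof.
move=> x0; elim: n => [|n IHn]; first by rewrite expr0 valuation1 mul0r.
by rewrite exprS valuationM ?expf_neq0 // IHn; lia.
Qed.

Lemma valuationN (x : F) : x != 0 -> v (- x) = v x.
Proof.
move=> x0; have N1 : -1 != 0 :> F by rewrite oppr_eq0 oner_eq0.
have := valuationX 2 N1; rewrite sqrrN expr1n valuation1 => vN1.
by rewrite -mulN1r valuationM //; lia.
Qed.

Lemma vge0 N : vge v 0 N.
Proof. by rewrite /vge eqxx. Qed.

Lemma vge_nz (x : F) N : x != 0 -> vge v x N = (N <= v x).
Proof. by rewrite /vge => /negbTE ->. Qed.

Lemma vge_valuation (x : F) : vge v x (v x).
Proof. by rewrite /vge lexx orbT. Qed.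

Lemma vge_le (x : F) N M : vge v x N -> M <= N -> vge v x M.
Proof. by rewrite /vge => /orP[-> // | Nx] MN; rewrite (le_trans MN Nx) orbT. Qed.

Lemma vge1 N : vge v 1 N = (N <= 0).
Proof. by rewrite vge_nz ?oner_eq0 // valuation1. Qed.

Lemma vgeN (x : F) N : vge v (- x) N = vge v x N.
Proof.
have [-> | x0] := eqVneq x 0; first by rewrite oppr0.
by rewrite !vge_nz ?oppr_eq0 // valuationN.
Qed.

Lemma vgeD (x y : F) N : vge v x N -> vge v y N -> vge v (x + y) N.
Proof.
have [-> | x0] := eqVneq x 0; first by rewrite add0r.
have [-> | y0] := eqVneq y 0; first by rewrite addr0.
have [-> | xy0] := eqVneq (x + y) 0; first by rewrite vge0.
rewrite !vge_nz // => Nx Ny; case: hv => _ /(_ x y x0 y0 xy0).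
by apply: le_trans; rewrite le_min Nx Ny.
Qed.

Lemma vgeB (x y : F) N : vge v x N -> vge v y N -> vge v (x - y) N.
Proof. by move=> Nx Ny; rewrite vgeD ?vgeN. Qed.

Lemma vgeM (x y : F) N M : vge v x N -> vge v y M -> vge v (x * y) (N + M).
Proof.
have [-> | x0] := eqVneq x 0; first by move=> *; rewrite mul0r vge0.
have [-> | y0] := eqVneq y 0; first by move=> *; rewrite mulr0 vge0.
by rewrite !vge_nz ?mulf_neq0 // valuationM // => Nx My; rewrite lerD.
Qed.

Lemma vgeMW (x y : F) N M P : vge v x N -> vge v y M -> P <= N + M -> vge v (x * y) P.
Proof. by move=> Nx My; apply: vge_le (vgeM Nx My). Qed.

Lemma vge_mulKl (y x : F) N : y != 0 -> vge v (y * x) N -> vge v x (N - v y).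
Proof.
move=> y0 /(vgeM (vge_valuation y^-1)).
by rewrite mulKf // valuationV // addrC.
Qed.

Lemma det1_vge (a b c d : F) N :
  a * d - b * c = 1 -> vge v (a * d) N -> vge v (b * c) N -> N <= 0.
Proof. by move=> det ad bc; rewrite -vge1 -det vgeB. Qed.

Lemma leading_entry (x y : F) : (x != 0) || (y != 0) ->
  (y != 0 /\ vge v x (v y)) \/ (x != 0 /\ vge v y (v x + 1)).
Proof.
have [-> /= | y0 _] := eqVneq y 0; first by rewrite orbF => x0; right; rewrite vge0.
have [yx | ] := boolP (vge v x (v y)); first by left.
case/norP => x0; rewrite -ltNge => xy.
by right; rewrite vge_nz // lezD1.
Qed.

Lemma OF_mx2 (a b c d : F) :
  OF v a -> OF v b -> OF v c -> OF v d -> forall i j, OF v (mx2 a b c d i j).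
Proof. by move=> Oa Ob Oc Od i j; rewrite mxE; do 2 case: ifP. Qed.

Lemma SL2O_mul (A B : 'M[F]_2) : SL2O v A -> SL2O v B -> SL2O v (A *m B).
Proof.
move=> [dA OA] [dB OB]; split; first by rewrite det_mulmx dA dB mulr1.
move=> i j; rewrite mxE; apply: (big_ind (OF v)) => [|x y|l _].
- exact: vge0.
- exact: vgeD.
- by have := vgeM (OA i l) (OB l j).
Qed.

Lemma SL2O_adj (A : 'M[F]_2) : SL2O v A -> SL2O v (\adj A).
Proof.
move=> [dA OA]; rewrite [A]mx2_eta in dA *; rewrite adj_mx2; split.
  by move: dA; rewrite !det_mx2 => <-; ring.
by apply: OF_mx2; rewrite /OF ?vgeN; apply: OA.
Qed.

Lemma SL2O_weyl : SL2O v (weyl F).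
Proof.
split; first exact: det_weyl.
by apply: OF_mx2; rewrite /OF ?vgeN ?vge0 ?vge1.
Qed.

Variables (k : finFieldType) (red : F -> k) (tl : k -> F) (pi : F).
Hypotheses (hred : is_residue_map v red) (hteich : is_teichmuller v red tl).
Hypotheses (hpi0 : pi != 0) (hpi : v pi = 1).

Lemma OF_pi : OF v pi.
Proof. by rewrite /OF vge_nz // hpi. Qed.

Lemma valuation_piX n : v (pi ^+ n) = n%:Z.
Proof. by rewrite valuationX // hpi mulr1. Qed.

Lemma valuation_piXN n : v (pi ^- n) = - n%:Z.
Proof. by rewrite valuationV ?expf_neq0 // valuation_piX. Qed.

Lemma vge_piX_div m n N : vge v (pi ^+ m / pi ^+ n) N = (N <= m%:Z - n%:Z).
Proof.
by rewrite vge_nz ?mulf_neq0 ?invr_eq0 ?expf_neq0 // valuationM ?invr_eq0 ?expf_neq0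
  // valuation_piX valuation_piXN.
Qed.

Lemma red_eq (x y : F) : OF v x -> OF v y -> red x = red y <-> vge v (x - y) 1.
Proof.
case: hred => _ redD _ redK _ Ox Oy; have Oxy : OF v (x - y) by exact: vgeB.
rewrite -redK // -{1}[x](subrK y) (redD _ _ Oxy Oy).
by split => [| ->]; [rewrite -{2}[red y]add0r => /addIr | rewrite add0r].
Qed.

Lemma tlift_OF l : OF v (tl l).
Proof.
case: hteich => tl0 tlP; have [-> | l0] := eqVneq l 0; first by rewrite tl0; apply: vge0.
by case: (tlP l l0).
Qed.

Lemma red_tlift l : red (tl l) = l.
Proof.
case: hteich => tl0 tlP; have [-> | l0] := eqVneq l 0; last by case: (tlP l l0).
by rewrite tl0; case: hred => _ _ _ redK _; apply/redK; apply: vge0.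
Qed.

Lemma Iset0 (x : F) : Iset tl pi 0 x <-> x = 0.
Proof.
split; first by case=> lam ->; rewrite big_ord0.
by move=> ->; exists (fun=> 0); rewrite big_ord0.
Qed.

Lemma IsetS n (x : F) :
  Iset tl pi n.+1 x <-> exists l y, Iset tl pi n y /\ x = tl l + pi * y.
Proof.
split=> [[lam ->] | [l [y [[lam ->] ->]]]].
  exists (lam ord0), (\sum_(i < n) pi ^+ i * tl (lam (lift ord0 i))).
  split; first by exists (fun i => lam (lift ord0 i)).
  rewrite big_ord_recl expr0 mul1r mulr_sumr; congr (_ + _).
  by apply: eq_bigr => i _; rewrite exprS mulrA.
exists (fun j => if unlift ord0 j is Some i then lam i else l).
rewrite big_ord_recl unlift_none expr0 mul1r mulr_sumr; congr (_ + _).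
by apply: eq_bigr => i _; rewrite liftK exprS mulrA.
Qed.

Lemma Iset_OF n (x : F) : Iset tl pi n x -> OF v x.
Proof.
elim: n x => [|n IHn] x; first by move/Iset0 => ->; exact: vge0.
case/IsetS => l [y [Iy ->]]; apply: vgeD; first exact: tlift_OF.
by have := vgeM OF_pi (IHn y Iy).
Qed.

Lemma Iset_approx n (x : F) :
  OF v x -> exists2 kappa, Iset tl pi n kappa & vge v (x - kappa) n.
Proof.
elim: n x => [|n IHn] x Ox; first by exists 0; [apply/Iset0 | rewrite subr0].
have x1 : vge v (x - tl (red x)) 1.
  by apply/red_eq; rewrite ?tlift_OF ?red_tlift.
have Oy : OF v ((x - tl (red x)) / pi).
  by apply: vgeMW x1 (vge_valuation _) _; rewrite valuationV // hpi.
have [kappa Ik yk] := IHn _ Oy.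
exists (tl (red x) + pi * kappa); first by apply/IsetS; exists (red x), kappa.
rewrite (_ : x - _ = pi * ((x - tl (red x)) / pi - kappa)); last by field.
by apply: vgeMW (vge_valuation _) yk _; rewrite hpi; lia.
Qed.

Lemma Iset_inj n (x1 x2 : F) :
  Iset tl pi n x1 -> Iset tl pi n x2 -> vge v (x1 - x2) n -> x1 = x2.
Proof.
elim: n x1 x2 => [|n IHn] x1 x2; first by move=> /Iset0 -> /Iset0 ->.
case/IsetS => l1 [y1 [Iy1 ->]]; case/IsetS => l2 [y2 [Iy2 ->]] x12.
have y12 : vge v (pi * (y1 - y2)) 1.
  apply: vgeMW (vge_valuation _) (vgeB (Iset_OF Iy1) (Iset_OF Iy2)) _.
  by rewrite hpi.
have l12 : l1 = l2.
  rewrite -(red_tlift l1) -(red_tlift l2); apply/red_eq; rewrite ?tlift_OF //.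
  rewrite (_ : tl l1 - tl l2 = tl l1 + pi * y1 - (tl l2 + pi * y2) - pi * (y1 - y2)).
    by apply: vgeB y12; apply: vge_le x12 _; lia.
  by ring.
rewrite -l12 (_ : tl l1 + _ - _ = pi * (y1 - y2)) in x12 *; last by ring.
rewrite (IHn y1 y2) //; apply: vge_le (vge_mulKl hpi0 x12) _.
by rewrite hpi; lia.
Qed.

Lemma det_rep b m (kappa : F) : \det (rep pi b m kappa) = 1.
Proof. by case: b; rewrite det_mx2; field; rewrite expf_neq0. Qed.

Lemma rep_trueE m (kappa : F) :
  rep pi true m kappa = rep pi false m (pi * kappa) *m weyl F.
Proof. by rewrite /rep mulmx_weyl mulrA mulNr. Qed.

Lemma rep_index_OF b m (kappa : F) : rep_index tl pi b m kappa -> OF v kappa.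
Proof. by case: b => [[_]|] /Iset_OF. Qed.

Definition represented (g : 'M[F]_2) : Prop :=
  exists b m kappa, rep_index tl pi b m kappa /\
    exists2 h, SL2O v h & g = h *m rep pi b m kappa.

Lemma represented_mulKl (h g : 'M[F]_2) :
  SL2O v h -> represented (h *m g) -> represented g.
Proof.
move=> Oh [b [m [kappa [I [h' Oh' e]]]]]; exists b, m, kappa; split => //.
exists (\adj h *m h'); first exact: SL2O_mul (SL2O_adj Oh) Oh'.
by rewrite -mulmxA -e mulmxA mul_adj_mx Oh.1 mul1mx.
Qed.

Lemma coset_rep_false (a b c d kappa : F) m :
  a * d - b * c = 1 -> d != 0 -> v d = - m%:Z ->
  vge v a (- m%:Z) -> vge v b (- m%:Z) -> vge v c (- m%:Z) ->
  vge v (c / d - kappa) (2 * m)%N ->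
  exists2 h, SL2O v h & mx2 a b c d = h *m rep pi false m kappa.
Proof.
move=> det d0 vd ma mb mc ck.
exists (mx2 a b c d *m \adj (rep pi false m kappa)); last by rewrite mulmx_adjK ?det_rep.
split; first by rewrite det_mulmx_adj ?det_rep // det_mx2.
have pm0 : pi ^+ m != 0 by rewrite expf_neq0.
have pm : vge v (pi ^+ m) m by rewrite vge_nz // valuation_piX.
have pmN : vge v (pi ^- m) (- m%:Z) by rewrite vge_nz ?invr_eq0 // valuation_piXN.
have dV : vge v d^-1 m by rewrite vge_nz ?invr_eq0 // valuationV // vd opprK.
have dm : vge v d (- m%:Z) by rewrite -vd vge_valuation.
rewrite /rep adj_mx2 mx2_mul oppr0 !mulr0 !add0r; apply: OF_mx2.
- rewrite (_ : _ + _ = pi ^- m * ((a * d - b * c) / d + b * (c / d - kappa))).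
    rewrite det mul1r; apply: vgeMW pmN (vgeD dV _) _; last lia.
    by apply: vgeMW mb ck _; lia.
  by field; rewrite d0 pm0.
- by apply: vgeMW mb pm _; lia.
- rewrite (_ : _ + _ = pi ^- m * (d * (c / d - kappa))); last by field; rewrite d0 pm0.
  by apply: vgeMW pmN (vgeM dm ck) _; lia.
- by apply: vgeMW dm pm _; lia.
Qed.

Lemma represented_dominant_d (a b c d : F) : a * d - b * c = 1 -> d != 0 ->
  vge v a (v d) -> vge v b (v d) -> vge v c (v d) -> represented (mx2 a b c d).
Proof.
move=> det d0 da db dc.
have vd_le0 : v d + v d <= 0.
  exact: det1_vge det (vgeM da (vge_valuation d)) (vgeM db dc).
pose m := `|v d|%N; have vd : v d = - m%:Z by rewrite /m; lia.
have Ocd : OF v (c / d).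
  by apply: vgeMW dc (vge_valuation _) _; rewrite valuationV ?invr_eq0 //; lia.
have [kappa Ik ck] := Iset_approx (2 * m) Ocd.
exists false, m, kappa; split => //.
by apply: coset_rep_false ck; rewrite -?vd.
Qed.

Lemma represented_leading_c (a b c d : F) : a * d - b * c = 1 -> c != 0 ->
  vge v a (v c) -> vge v b (v c + 1) -> vge v d (v c + 1) ->
  represented (mx2 a b c d).
Proof.
move=> det c0 ca cb cd.
have vc_lt0 : v c + (v c + 1) <= 0.
  apply: det1_vge det (vgeM ca cd) _.
  by apply: vgeMW cb (vge_valuation c) _; lia.
pose m := `|v c|%N; have vc : v c = - m%:Z by rewrite /m; lia.
have m_gt0 : (0 < m)%N by rewrite /m; lia.
have Ok : OF v (- (d / (pi * c))).
  rewrite /OF vgeN; apply: vgeMW cd (vge_valuation _) _.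
  by rewrite valuationV ?mulf_neq0 // valuationM // hpi; lia.
have [kappa Ik dk] := Iset_approx (2 * m - 1) Ok.
exists true, m, kappa; split => //.
have [h Oh e] : exists2 h, SL2O v h &
    mx2 (- b) a (- d) c = h *m rep pi false m (pi * kappa).
  apply: coset_rep_false; rewrite ?vgeN -?vc //.
  - by rewrite -det; ring.
  - by apply: vge_le cb _; lia.
  - by apply: vge_le cd _; lia.
  rewrite (_ : _ - _ = pi * (- (d / (pi * c)) - kappa)); last by field; rewrite c0 hpi0.
  by apply: vgeMW (vge_valuation _) dk _; rewrite hpi; lia.
by exists h => //; rewrite rep_trueE mulmxA -e mulmx_weyl !opprK.
Qed.

Lemma represented_leading_d (a b c d : F) : a * d - b * c = 1 -> d != 0 ->
  vge v b (v d) -> represented (mx2 a b c d).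
Proof.
move=> det d0 db.
have [/andP[da dc] | not_dominant] := boolP (vge v a (v d) && vge v c (v d)).
  exact: represented_dominant_d.
case/andP: (det1_cols det) => /leading_entry[[c0 ca] | [a0 ac]] _.
- have cd : v c < v d.
    by rewrite ltNge; apply: contra not_dominant => dc; rewrite (vge_le ca) // vge_nz.
  by apply: represented_leading_c => //; [apply: vge_le db _ | rewrite vge_nz]; lia.
- have ad : v a < v d.
    rewrite ltNge; apply: contra not_dominant => da.
    by rewrite vge_nz // da (vge_le ac) //; lia.
  apply: (represented_mulKl SL2O_weyl); rewrite weyl_mulmx.
  apply: represented_leading_c; rewrite ?vgeN.
  + by rewrite -det; ring.
  + by [].
  + by apply: vge_le ac _; lia.
  + by rewrite vge_nz //; lia.
  + by apply: vge_le db _; lia.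
Qed.

Lemma represented_mx2 (a b c d : F) : a * d - b * c = 1 -> represented (mx2 a b c d).
Proof.
move=> det; case/andP: (det1_cols det) => _ /leading_entry[[d0 db] | [b0 bd]].
  exact: represented_leading_d.
apply: (represented_mulKl SL2O_weyl); rewrite weyl_mulmx.
apply: represented_leading_d => //; first by rewrite -det; ring.
by rewrite vgeN; apply: vge_le bd _; lia.
Qed.

Lemma rep_false_coset_inj m1 m2 (kappa1 kappa2 : F) h :
  SL2O v h -> rep pi false m1 kappa1 = h *m rep pi false m2 kappa2 ->
  m1 = m2 /\ vge v (kappa1 - kappa2) (2 * m1)%N.
Proof.
move=> [_ Oh] e.
have eh : h = mx2 (pi ^+ m1 / pi ^+ m2) 0
    (pi ^- m1 * pi ^- m2 * (kappa1 - kappa2)) (pi ^+ m2 / pi ^+ m1).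
  rewrite -[h](mulmxKadj h (det_rep false m2 kappa2)) -e /rep adj_mx2 mx2_mul.
  by congr mx2; ring.
move: (Oh 0 0) (Oh 1 1) (Oh 1 0); rewrite eh !mxE /= /OF !vge_piX_div => m21 m12.
have y0 : pi ^- m1 * pi ^- m2 != 0 by rewrite mulf_neq0 ?invr_eq0 ?expf_neq0.
move/(vge_mulKl y0); rewrite valuationM ?invr_eq0 ?expf_neq0 // !valuation_piXN.
by move=> k12; split; [lia | apply: vge_le k12 _; lia].
Qed.

Lemma rep_false_true_coset_neq m1 m2 (kappa1 kappa2 : F) h :
  (0 < m2)%N -> OF v kappa1 -> OF v kappa2 -> SL2O v h ->
  rep pi false m1 kappa1 <> h *m rep pi true m2 kappa2.
Proof.
move=> m2_gt0 O1 O2 [_ Oh] e.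
(* 1 + pi kappa1 kappa2 is a unit, so h 1 0 has negative valuation. *)
have y0 : - (pi ^- m1 * pi ^- m2) != 0.
  by rewrite oppr_eq0 mulf_neq0 ?invr_eq0 ?expf_neq0.
have : h 1 0 = - (pi ^- m1 * pi ^- m2) * (1 + pi * kappa1 * kappa2).
  rewrite -[h](mulmxKadj h (det_rep true m2 kappa2)) -e /rep adj_mx2 mx2_mul mxE /=.
  by ring.
move: (Oh 1 0) => /[swap] -> /(vge_mulKl y0).
rewrite valuationN ?valuationM ?mulf_neq0 ?invr_eq0 ?expf_neq0 // !valuation_piXN.
move=> unit_ge; have p1 : vge v pi 1 by rewrite -hpi vge_valuation.
have : vge v (1 + pi * kappa1 * kappa2 - pi * kappa1 * kappa2) 1.
  apply: vgeB; first by apply: vge_le unit_ge _; lia.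
  by have := vgeM (vgeM p1 O1) O2.
by rewrite addrK vge1.
Qed.

Lemma rep_coset_uniq b1 m1 (kappa1 : F) b2 m2 kappa2 :
  rep_index tl pi b1 m1 kappa1 -> rep_index tl pi b2 m2 kappa2 ->
  forall h, SL2O v h ->
  rep pi b1 m1 kappa1 = h *m rep pi b2 m2 kappa2 ->
  (b1, m1, kappa1) = (b2, m2, kappa2).
Proof.
move=> I1 I2 h Oh e; have O1 := rep_index_OF I1; have O2 := rep_index_OF I2.
case: b1 b2 I1 I2 e => [] [] I1 I2 e.
- rewrite !rep_trueE mulmxA in e.
  move/(congr1 (mulmx^~ (\adj (weyl F)))): e; rewrite !mulmxKadj ?det_weyl // => e.
  have [m12 k12] := rep_false_coset_inj Oh e; subst m2.
  move: k12; rewrite -mulrBr => /(vge_mulKl hpi0); rewrite hpi => k12.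
  rewrite (Iset_inj I1.2 I2.2) //; apply: vge_le k12 _.
  by case: I1 => m1_gt0 _; lia.
- have e' : rep pi false m2 kappa2 = \adj h *m rep pi true m1 kappa1.
    by rewrite e mulmxA mul_adj_mx Oh.1 mul1mx.
  by case: (rep_false_true_coset_neq I1.1 O2 O1 (SL2O_adj Oh) e').
- by case: (rep_false_true_coset_neq I2.1 O1 O2 Oh e).
- have [m12 k12] := rep_false_coset_inj Oh e; subst m2.
  by rewrite (Iset_inj I1 I2 k12).
Qed.

End ValuedField.

Theorem lemma2p3
  (p : nat) (F : fieldType) (v : F -> int) (k : finFieldType)
  (red : F -> k) (tlift : k -> F) (pi : F)
  (hp : prime p)
  (hchar0 : [pchar F] =i pred0)
  (hv : is_discrete_valuation v)
  (hcomplete : v_complete v)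
  (hred : is_residue_map v red)
  (hcharp : p \in [pchar k])
  (hteich : is_teichmuller v red tlift)
  (hpi0 : pi != 0) (hpi : v pi = 1) :
  (forall b m kappa, rep_index tlift pi b m kappa -> SL2 (rep pi b m kappa)) /\
  (forall g : 'M[F]_2, SL2 g ->
     exists b m kappa, rep_index tlift pi b m kappa /\
       exists2 h, SL2O v h & g = h *m rep pi b m kappa) /\
  (forall b1 m1 kappa1 b2 m2 kappa2,
     rep_index tlift pi b1 m1 kappa1 -> rep_index tlift pi b2 m2 kappa2 ->
     forall h, SL2O v h -> rep pi b1 m1 kappa1 = h *m rep pi b2 m2 kappa2 ->
     (b1, m1, kappa1) = (b2, m2, kappa2)).
Proof.
split; first by move=> b m kappa _; apply: det_rep.
split; last exact: (rep_coset_uniq hv hred hteich hpi0 hpi).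
move=> g; rewrite /SL2 [g]mx2_eta det_mx2 => det.
exact: (represented_mx2 hv hred hteich hpi0 hpi det).
Qed.
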